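(* Let $n\in\mathbb{N}$ and $\ell\in\{a,a^{-1},b,b^{-1}\}$. If $w\in\ell I_n\setminus I_n$, then $w$ begins with $\ell$.
   Context: $\mathbb{F}$ is the free group on generators $a,b$ with identity $e$. For $n=4k+i$ with $k\in\mathbb{N}$ and $0\le i<4$, set $\ell_n=a,a^{-1},b,b^{-1}$ according as $i=0,1,2,3$. For $g\in\mathbb{F}$ and $S\subseteq\mathbb{F}$ let $gS=\{gs:s\in S\}$. Define $I_0=\{e\}$ and $I_{n+1}=I_n\cup\ell_nI_n$. For $w\in\mathbb{F}$, $\overline{w}$ is its reduced word and $*$ is concatenation of words. An element $w$ begins with $\ell$ if $\overline{w}=\overline{\ell}*\overline{u}$ for some $u\in\mathbb{F}$. *)

(* The free group F on {a,b} is modelled as the type of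
   freely reduced words over the alphabet {a, a^-1, b, b^-1}, with product
   given by free reduction of the concatenation. *)
From mathcomp Require Import all_boot.
Set Implicit Arguments. Unset Strict Implicit. Unset Printing Implicit Defensive.

(* A letter is (generator, inverted?): generator false = a, true = b. *)
Definition letter := (bool * bool)%type.
Definition la : letter := (false, false).
Definition la_inv : letter := (false, true).
Definition lb : letter := (true, false).
Definition lb_inv : letter := (true, true).
Definition linv (x : letter) : letter := (x.1, ~~ x.2).

Definition nocancel (x y : letter) : bool := y != linv x.
Definition reducedb (w : seq letter) : bool := sorted nocancel w.

Definition push (x : letter) (acc : seq letter) : seq letter :=
  match acc with
  | y :: t => if y == linv x then t else x :: acc
  | [::] => [:: x]
  end.
Definition reduce (w : seq letter) : seq letter := foldr push [::] w.

Lemma reduce_reduced w : reducedb (reduce w).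
Proof.
elim: w => [|x w IH] //=.
rewrite /push; case: (reduce w) IH => [|y t] //= H.
case: ifP => [_|/negbT Hy]; first exact: (path_sorted H).
by rewrite /reducedb /= /nocancel Hy.
Qed.

(* The free group F: elements are reduced words; val w is \overline{w}. *)
Definition F := {w : seq letter | reducedb w}.
Definition Fmk (w : seq letter) : F := exist _ (reduce w) (reduce_reduced w).
Definition Fmul (g h : F) : F := Fmk (val g ++ val h).
Definition Fe : F := exist _ [::] is_true_true.
Definition gen (x : letter) : F := Fmk [:: x].

Definition ell (n : nat) : letter :=
  match n %% 4 with
  | 0 => la | 1 => la_inv | 2 => lb | _ => lb_inv
  end.

Definition Fset := F -> Prop.
Definition lmulset (g : F) (S : Fset) : Fset := fun x => exists2 s, S s & x = Fmul g s.

Fixpoint I (n : nat) : Fset :=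
  match n with
  | 0 => fun x => x = Fe
  | k.+1 => fun x => I k x \/ lmulset (gen (ell k)) (I k) x
  end.

Definition begins_with (l : F) (w : F) : Prop :=
  exists u : F, val w = val l ++ val u.

From mathcomp Require Import all_boot.

(* Proof of Lemma 2.3.  Left multiplication by a generator [l] acts on a
   reduced word [s] in one of two ways: either it prepends [l] (so the
   product begins with [l]), or it cancels the first letter of [s] (so the
   product is [s] with its first letter dropped).  We call a subset of F
   suffix-closed if it is stable under dropping the first letter of a
   reduced word.  The singleton {e} is trivially suffix-closed, and the
   dichotomy above shows that S ∪ l S is suffix-closed whenever S is;
   hence every I_n is suffix-closed.  Now if w = l s with s ∈ I_n does not
   begin with l, then w arises from s by dropping its first letter, so
   w ∈ I_n by suffix-closedness. *)

Lemma reduce_id {w : seq letter} : reducedb w -> reduce w = w.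
Proof.
elim: w => [|x w IH] //= Hxw.
rewrite IH; last exact: path_sorted Hxw.
case: w Hxw {IH} => [|y t] //= /andP [Hxy _].
by rewrite /nocancel in Hxy; rewrite (negbTE Hxy).
Qed.

Lemma val_mul_gen (l : letter) (s : F) : val (Fmul (gen l) s) = push l (val s).
Proof. by rewrite /Fmul /= (reduce_id (valP s)). Qed.

Definition drops_first (s t : F) : Prop := exists x, val s = x :: val t.

Definition suffix_closed (S : Fset) : Prop :=
  forall s t, S s -> drops_first s t -> S t.

Lemma mul_gen_cases (l : letter) (s : F) :
  val (Fmul (gen l) s) = l :: val s \/ drops_first s (Fmul (gen l) s).
Proof.
rewrite /drops_first val_mul_gen /=.
case: (val s) => [|y t] /=; first by left.
by case: ifP => _; [right; exists y | left].
Qed.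

Lemma begins_drops_eq {l : letter} {s t u : F} :
  val s = l :: val u -> drops_first s t -> t = u.
Proof. by move=> Eu [x]; rewrite Eu => -[_ /val_inj]. Qed.

Lemma suffix_closed_unit : suffix_closed (fun x => x = Fe).
Proof. by move=> s t -> [x]. Qed.

Lemma suffix_closed_step (l : letter) (S : Fset) :
  suffix_closed S -> suffix_closed (fun x => S x \/ lmulset (gen l) S x).
Proof.
move=> clS s t [Ss|[s' Ss' ->]] Hst; first by left; exact: clS Ss Hst.
left; case: (mul_gen_cases l s') => [Eprep|Hs's].
- by rewrite (begins_drops_eq Eprep Hst).
- exact: clS (clS _ _ Ss' Hs's) Hst.
Qed.

Lemma suffix_closed_I (n : nat) : suffix_closed (I n).
Proof.
elim: n => [|n IH]; first exact: suffix_closed_unit.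
exact: suffix_closed_step.
Qed.

Theorem lemma2p3 (n : nat) (l : letter) (w : F) :
  lmulset (gen l) (I n) w -> ~ I n w -> begins_with (gen l) w.
Proof.
move=> [s Is ->] notIw.
case: (mul_gen_cases l s) => [Eprep|Hdrop]; first by exists s.
by case: notIw; exact: suffix_closed_I Is Hdrop.
Qed.
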